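(* Let $\mathcal{H}$ be a finite-dimensional complex Hilbert space and let $\Phi: B(\mathcal{H})\to B(\mathcal{H})$ be a Hermitian-preserving trace-preserving linear map which is invertible. Then $\Phi$ is semi-positive if and only if $\Phi^{-1}$ is semi-positive. In particular, if $\Phi$ is CPTP (or positive and trace-preserving) and invertible, then $\Phi^{-1}$ is semi-positive and trace-preserving.
   Context: $B(\mathcal{H})$ denotes all linear operators on $\mathcal{H}$; a density matrix is a positive semidefinite operator of trace one. A map is Hermitian-preserving if $\Phi(X^\dagger)=\Phi(X)^\dagger$ and trace-preserving if $\operatorname{Tr}\Phi(X)=\operatorname{Tr}X$. A Hermitian-preserving map $\Phi$ is semi-positive if there exists an invertible density matrix $\rho$ such that $\Phi(\rho)$ is an invertible density matrix. *)

From HB Require Import structures.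
From mathcomp Require Import all_boot all_order all_algebra.
From mathcomp Require Import reals.
From mathcomp.real_closed Require Import complex.
Set Implicit Arguments. Unset Strict Implicit. Unset Printing Implicit Defensive.
Import Order.TTheory GRing.Theory Num.Theory.
Local Open Scope ring_scope.

(* Complex numbers: C = R[i] for a real field R : realType.
   The Hilbert space H is C^m; B(H) = 'M[C]_m. *)

Section QDefs.
Variable C : numClosedFieldType.

Definition adjmx m n (A : 'M[C]_(m, n)) : 'M[C]_(n, m) := map_mx Num.conj A^T.

Definition hermitianmx m (A : 'M[C]_m) : Prop := adjmx A = A.

Definition psdmx m (A : 'M[C]_m) : Prop :=
  hermitianmx A /\ forall v : 'cV[C]_m, 0 <= (adjmx v *m A *m v) 0 0.

Definition density m (A : 'M[C]_m) : Prop := psdmx A /\ \tr A = 1.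

Definition invertible_density m (A : 'M[C]_m) : Prop :=
  density A /\ A \in unitmx.

Definition hermitian_preserving m (Phi : 'M[C]_m -> 'M[C]_m) : Prop :=
  forall X, Phi (adjmx X) = adjmx (Phi X).

Definition trace_preserving m (Phi : 'M[C]_m -> 'M[C]_m) : Prop :=
  forall X, \tr (Phi X) = \tr X.

Definition semi_positive m (Phi : 'M[C]_m -> 'M[C]_m) : Prop :=
  hermitian_preserving Phi /\
  exists rho, invertible_density rho /\ invertible_density (Phi rho).

Definition positive_map m (Phi : 'M[C]_m -> 'M[C]_m) : Prop :=
  forall X, psdmx X -> psdmx (Phi X).

(* id_k (x) Phi acting on k x k block matrices with m x m blocks *)
Definition ampliation k m (Phi : 'M[C]_m -> 'M[C]_m)
    (X : 'M[C]_(\sum_(i < k) m)) : 'M[C]_(\sum_(i < k) m) :=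
  \mxblock_(i < k, j < k) Phi (submxblock X i j).

Definition completely_positive m (Phi : 'M[C]_m -> 'M[C]_m) : Prop :=
  forall k (X : 'M[C]_(\sum_(i < k) m)), psdmx X -> psdmx (ampliation Phi X).

End QDefs.

From Pilot Require Import Defs.
From HB Require Import structures.
From mathcomp Require Import all_boot all_order all_algebra.
From mathcomp Require Import reals.
From mathcomp.real_closed Require Import complex.
Set Implicit Arguments. Unset Strict Implicit. Unset Printing Implicit Defensive.
Import Order.TTheory GRing.Theory Num.Theory.
Local Open Scope ring_scope.

(* Semi-positivity is symmetric under inversion because a witness rho for Phi
   yields the witness Phi rho for Phi^-1.  If Phi is positive, trace-preserving
   and invertible, the maximally mixed state 1/n is a witness: were w a kernel
   vector of Phi 1, then A |-> w* (Phi A) w would be a positive linear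
   functional vanishing at 1, hence identically zero, whereas its value at
   Phi^-1 (w w* ) is (w* w)^2 > 0. *)

Section Adjoint.
Variable C : numClosedFieldType.
Implicit Types m n p : nat.

Lemma adjmxK m n (A : 'M[C]_(m, n)) : adjmx (adjmx A) = A.
Proof. by apply/matrixP => i j; rewrite !mxE conjCK. Qed.

Lemma adjmxM m n p (A : 'M[C]_(m, n)) (B : 'M[C]_(n, p)) :
  adjmx (A *m B) = adjmx B *m adjmx A.
Proof. by rewrite /adjmx trmx_mul map_mxM. Qed.

Lemma adjmxD m n (A B : 'M[C]_(m, n)) : adjmx (A + B) = adjmx A + adjmx B.
Proof. by apply/matrixP => i j; rewrite !mxE rmorphD. Qed.

Lemma adjmxZ m n a (A : 'M[C]_(m, n)) : adjmx (a *: A) = a^* *: adjmx A.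
Proof. by apply/matrixP => i j; rewrite !mxE rmorphM. Qed.

Lemma adjmx0 m n : adjmx (0 : 'M[C]_(m, n)) = 0.
Proof. by apply/matrixP => i j; rewrite !mxE rmorph0. Qed.

Lemma adjmx_scalar m a : adjmx (a%:M : 'M[C]_m) = a^*%:M.
Proof. by apply/matrixP => i j; rewrite !mxE rmorphMn eq_sym. Qed.

Lemma adjmx_delta m (k : 'I_m) : adjmx (delta_mx k 0 : 'cV[C]_m) = delta_mx 0 k.
Proof. by apply/matrixP => i j; rewrite !mxE conjC_nat andbC. Qed.

Lemma adjmx_mxcol k m (c : 'I_k -> 'cV[C]_m) :
  adjmx (\mxcol_i c i) = \mxrow_i adjmx (c i).
Proof. by apply/matrixP => i j; rewrite !mxE. Qed.

Lemma adjmx_mxblock k m (B : 'I_k -> 'I_k -> 'M[C]_m) :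
  adjmx (\mxblock_(i, j) B i j) = \mxblock_(i, j) adjmx (B j i).
Proof. by apply/matrixP => i j; rewrite !mxE. Qed.

Lemma cnorm2_ge0 m (v : 'cV[C]_m) : 0 <= (adjmx v *m v) 0 0.
Proof.
by rewrite mxE; apply: sumr_ge0 => k _; rewrite !mxE mulrC mul_conjC_ge0.
Qed.

Lemma cnorm2_eq0 m (v : 'cV[C]_m) : (adjmx v *m v) 0 0 = 0 -> v = 0.
Proof.
rewrite mxE => /eqP; rewrite psumr_eq0 => [/allP v0|k _]; last first.
  by rewrite !mxE mulrC mul_conjC_ge0.
apply/matrixP => k l; rewrite (ord1 l) mxE.
by have := v0 k (mem_index_enum _); rewrite !mxE mulrC mul_conjC_eq0 => /eqP.
Qed.

Lemma psdmx_rank1 m (u : 'cV[C]_m) : psdmx (u *m adjmx u).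
Proof.
split; first by rewrite /Defs.hermitianmx adjmxM adjmxK.
move=> v; rewrite mulmxA -mulmxA -[adjmx v *m u]adjmxK adjmxM adjmxK.
by rewrite mxE big_ord1 !mxE mulrC mul_conjC_ge0.
Qed.

Lemma psdmx_scalar m (a : C) : 0 <= a -> psdmx (a%:M : 'M_m).
Proof.
move=> a_ge0; split; first by rewrite /Defs.hermitianmx adjmx_scalar geC0_conj.
by move=> v; rewrite mul_mx_scalar -scalemxAl mxE mulr_ge0 ?cnorm2_ge0.
Qed.

Lemma psdmx_mxblock1 m (Z : 'M[C]_m) :
  psdmx (\mxblock_(i < 1, j < 1) Z) <-> psdmx Z.
Proof.
have quad (c : 'I_1 -> 'cV[C]_m) :
    adjmx (\mxcol_i c i) *m \mxblock_(i < 1, j < 1) Z *m \mxcol_j c j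
    = adjmx (c ord0) *m Z *m c ord0.
  by rewrite adjmx_mxcol mul_mxrow_mxblock mul_mxrow_mxcol !big_ord1.
split => [[hB qB]|[hZ qZ]]; split.
- move: hB; rewrite /Defs.hermitianmx adjmx_mxblock.
  by move/(congr1 (fun M => submxblock M ord0 ord0)); rewrite !mxblockK.
- by move=> v; rewrite -(quad (fun _ => v)) qB.
- by rewrite /Defs.hermitianmx adjmx_mxblock hZ.
- by move=> v; rewrite -(submxcolK v) quad qZ.
Qed.

End Adjoint.

Section PositiveFunctional.
Variables (C : numClosedFieldType) (m : nat) (f : 'M[C]_m -> C).
Hypotheses (fD : forall A B, f (A + B) = f A + f B)
           (fZ : forall a A, f (a *: A) = a * f A)
           (f_ge0 : forall u : 'cV[C]_m, 0 <= f (u *m adjmx u))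
           (f1 : f 1%:M = 0).

Let f_sum I (r : seq I) (P : pred I) (F : I -> 'M[C]_m) :
  f (\sum_(i <- r | P i) F i) = \sum_(i <- r | P i) f (F i).
Proof.
by apply: (big_morph f fD); rewrite -(scale0r 0) fZ mul0r.
Qed.

Lemma posfun_delta_diag k : f (delta_mx k k) = 0.
Proof.
have e_ge0 j : 0 <= f (delta_mx j j).
  by rewrite -(mul_delta_mx (0 : 'I_1)) -adjmx_delta f_ge0.
move: f1; rewrite mx1_sum_delta f_sum => /eqP; rewrite psumr_eq0 //.
by move=> /allP/(_ k (mem_index_enum _))/eqP.
Qed.

Lemma posfun_polar (i j : 'I_m) c :
  let u : 'cV[C]_m := delta_mx i 0 + c *: delta_mx j 0 in
  f (u *m adjmx u) = c^* * f (delta_mx i j) + c * f (delta_mx j i).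
Proof.
rewrite /= adjmxD adjmxZ !adjmx_delta mulmxDl !mulmxDr -!scalemxAl -!scalemxAr.
rewrite !mul_delta_mx !fD !fZ !posfun_delta_diag.
by rewrite !mulr0 add0r addr0.
Qed.

(* The test vectors e_i + c e_j for c = 1, -1, 'i, -'i force
   f e_ij + f e_ji = 0 and f e_ij = f e_ji. *)
Lemma posfun_delta i j : f (delta_mx i j) = 0.
Proof.
have ge0_le0 (x : C) : 0 <= x -> 0 <= - x -> x = 0.
  by rewrite oppr_ge0 => x_ge0 x_le0; apply/le_anti; rewrite x_ge0 x_le0.
have := f_ge0 (delta_mx i 0 + 1 *: delta_mx j 0).
have := f_ge0 (delta_mx i 0 + (-1) *: delta_mx j 0).
have := f_ge0 (delta_mx i 0 + 'i *: delta_mx j 0).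
have := f_ge0 (delta_mx i 0 + (- 'i) *: delta_mx j 0).
rewrite !posfun_polar -conjCi conjCK conjCi rmorph1 rmorphN1 !mul1r !mulN1r.
move=> hNi hi hN h1.
have sum0 : f (delta_mx i j) + f (delta_mx j i) = 0.
  by apply: ge0_le0; rewrite // opprD.
have /eqP : 'i * (f (delta_mx j i) - f (delta_mx i j)) = 0.
  by apply: ge0_le0; rewrite mulrBr ?opprB -mulNr // addrC.
rewrite mulf_eq0 (negPf (@neq0Ci C)) subr_eq0 => /eqP eji.
by move/eqP: sum0; rewrite eji -mulr2n mulrn_eq0 => /eqP.
Qed.

Lemma posfun_eq0 A : f A = 0.
Proof.
rewrite (matrix_sum_delta A) f_sum big1 // => i _.
by rewrite f_sum big1 // => j _; rewrite fZ posfun_delta mulr0.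
Qed.

End PositiveFunctional.

Section PositiveMaps.
Variable C : numClosedFieldType.

Lemma cp_positive_map m (Phi : 'M[C]_m -> 'M[C]_m) :
  completely_positive Phi -> positive_map Phi.
Proof.
move=> cpPhi X /psdmx_mxblock1 psdX; apply/psdmx_mxblock1.
have := cpPhi 1%N _ psdX; rewrite /ampliation.
by under eq_mxblock do rewrite mxblockK.
Qed.

Lemma positive_surjective_unitmx1 m (Phi : {linear 'M[C]_m -> 'M[C]_m}) Psi :
  positive_map Phi -> cancel Psi Phi -> Phi 1%:M \in unitmx.
Proof.
move=> posPhi PsiK; apply: contraT; rewrite unitmxE unitfE negbK.
case/det0P=> v v_neq0 vPhi1.
have [hPhi1 _] := posPhi _ (psdmx_scalar m (@ler01 C)).
set w := adjmx v.
have Phi1w : Phi 1%:M *m w = 0 by rewrite -hPhi1 -adjmxM vPhi1 adjmx0.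
have w_neq0 : w != 0 by apply: contra v_neq0 => /eqP w0; rewrite -[v]adjmxK -/w w0 adjmx0.
pose f (A : 'M_m) := (adjmx w *m Phi A *m w) 0 0.
have fD A B : f (A + B) = f A + f B by rewrite /f linearD mulmxDr mulmxDl mxE.
have fZ a A : f (a *: A) = a * f A by rewrite /f linearZ -scalemxAr -scalemxAl mxE.
have f_ge0 (u : 'cV_m) : 0 <= f (u *m adjmx u) by have [_] := posPhi _ (psdmx_rank1 u); apply.
have f1 : f 1%:M = 0 by rewrite /f -mulmxA Phi1w mulmx0 mxE.
have := posfun_eq0 fD fZ f_ge0 f1 (Psi (w *m adjmx w)).
rewrite /f PsiK mulmxA -mulmxA mxE big_ord1 => /eqP; rewrite mulf_eq0 orbb.
by move/eqP/cnorm2_eq0/eqP; rewrite (negPf w_neq0).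
Qed.

Definition maximally_mixed n : 'M[C]_n.+1 := (n.+1%:R^-1)%:M.

Lemma maximally_mixed_invertible_density n :
  invertible_density (maximally_mixed n).
Proof.
have n1_neq0 : (n.+1%:R : C) != 0 by rewrite pnatr_eq0.
split; [split|].
- by apply: psdmx_scalar; rewrite invr_ge0 ler0n.
- by rewrite mxtrace_scalar -[LHS]mulr_natr mulVf.
- by rewrite /maximally_mixed -scalemx1 unitmxZ ?unitmx1 // unitfE invr_eq0.
Qed.

Lemma positive_tp_semi_positive n (Phi : {linear 'M[C]_n.+1 -> 'M[C]_n.+1}) Psi :
  hermitian_preserving Phi -> trace_preserving Phi -> positive_map Phi ->
  cancel Psi Phi -> semi_positive Phi.
Proof.
move=> hpPhi tpPhi posPhi PsiK; split => //; exists (maximally_mixed n).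
have [[psd_rho tr_rho] _] := maximally_mixed_invertible_density n.
split; first exact: maximally_mixed_invertible_density.
split; first by split; [exact: posPhi | rewrite tpPhi].
rewrite /maximally_mixed -scalemx1 linearZ unitmxZ.
  exact: positive_surjective_unitmx1 posPhi PsiK.
by rewrite unitfE invr_eq0 pnatr_eq0.
Qed.

Lemma semi_positive_inverse m (Phi Psi : 'M[C]_m -> 'M[C]_m) :
  cancel Phi Psi -> cancel Psi Phi -> semi_positive Phi -> semi_positive Psi.
Proof.
move=> PhiK PsiK [hpPhi [rho [rho_dens Phi_rho_dens]]]; split.
  by move=> X; apply: (can_inj PhiK); rewrite hpPhi !PsiK.
by exists (Phi rho); rewrite PhiK.
Qed.

Lemma trace_preserving_inverse m (Phi Psi : 'M[C]_m -> 'M[C]_m) :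
  cancel Psi Phi -> trace_preserving Phi -> trace_preserving Psi.
Proof. by move=> PsiK tpPhi X; rewrite -{2}(PsiK X) tpPhi. Qed.

End PositiveMaps.

Theorem corollary1 (R : realType) (n : nat)
    (Phi : {linear 'M[R[i]]_n.+1 -> 'M[R[i]]_n.+1})
    (Psi : 'M[R[i]]_n.+1 -> 'M[R[i]]_n.+1) :
  hermitian_preserving Phi -> trace_preserving Phi ->
  cancel Phi Psi -> cancel Psi Phi ->
  (semi_positive Phi <-> semi_positive Psi) /\
  ((completely_positive Phi \/ positive_map Phi) ->
     semi_positive Psi /\ trace_preserving Psi).
Proof.
move=> hpPhi tpPhi PhiK PsiK.
split; first by split; apply: semi_positive_inverse.
move=> cp_or_pos; split; last exact: trace_preserving_inverse tpPhi.
apply: (semi_positive_inverse PhiK PsiK).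
have posPhi : positive_map Phi by case: cp_or_pos => [/cp_positive_map|].
exact: positive_tp_semi_positive hpPhi tpPhi posPhi PsiK.
Qed.
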